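(* Consider the free pre-Lie algebra with one generator, realized as $(\mathcal{T},\to)$. A monomial basis of $(\mathcal{T},\to)$ is tree-grounded if and only if there is a section $S$ of the forget-planarity projection $\pi:\mathcal{T}^{pl}\to\mathcal{T}$ such that the basis consists exactly of the monomials $m_{S(t)}$, $t\in T$, where for a planar rooted tree $\sigma$, $m_\sigma$ denotes the unique monomial whose evaluation in $(\mathcal{T}^{pl},\circ\!\!\searrow)$ equals $\sigma$; in that case the basis vectors (evaluations in $(\mathcal{T},\to)$) are the elements $\widetilde{\Psi}_S(t)=\pi\circ\Psi\circ S(t)$, $t\in T$.
   Context: $\mathcal{T}$ is the vector space spanned by the set $T$ of non-planar rooted trees, $\mathcal{T}^{pl}$ the space spanned by planar rooted trees, $\pi$ the linear forget-planarity projection; a section of $\pi$ is a linear map $S:\mathcal{T}\to\mathcal{T}^{pl}$ sending each tree $t$ to a planar tree with $\pi(S(t))=t$. The grafting $s\to t=\sum_{v\in V(t)}s\to_v t$ (graft the root of $s$ by a new edge onto vertex $v$ of $t$) makes $\mathcal{T}$ the free pre-Lie algebra on the one-vertex tree $\bullet$. The Butcher product on non-planar trees is $s\circ\!\!\rightarrow B_+(t_1\cdots t_k)=B_+(s\,t_1\cdots t_k)$, where $B_+$ attaches the roots of the given trees to a new root; on planar trees the left Butcher product $\sigma\circ\!\!\searrow B_+(\tau_1\cdots\tau_k)=B_+(\sigma\tau_1\cdots\tau_k)$ inserts $\sigma$ as leftmost branch, and $(\mathcal{T}^{pl},\circ\!\!\searrow)$ is the free magmatic algebra on $\bullet$. The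 left grafting on planar trees is $\sigma\searrow\tau=\sum_{v\in V(\tau)}\sigma\searrow_v\tau$ (graft $\sigma$ at $v$ as the leftmost branch), and $\Psi:\mathcal{T}^{pl}\to\mathcal{T}^{pl}$ is the linear map with $\Psi(\bullet)=\bullet$, $\Psi(\sigma_1\circ\!\!\searrow\sigma_2)=\Psi(\sigma_1)\searrow\Psi(\sigma_2)$. A monomial $m$ is a parenthesized word built from the letter $\bullet$ and one binary operation; $m(\bullet,\to)$, $m(\bullet,\circ\!\!\rightarrow)$, $m(\bullet,\circ\!\!\searrow)$ denote its evaluations using grafting, Butcher product, left Butcher product respectively. A monomial basis is a set of monomials whose evaluations $m(\bullet,\to)$ form a basis of $\mathcal{T}$. It is tree-grounded if the trees $m(\bullet,\circ\!\!\rightarrow)$ (its ''lower-energy terms''), for $m$ in the set, are exactly the rooted trees of $T$, each obtained once. *)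

From HB Require Import structures.
From mathcomp Require Import all_boot all_order all_algebra.
From Stdlib Require List.
Set Implicit Arguments. Unset Strict Implicit. Unset Printing Implicit Defensive.
Import GRing.Theory.

Inductive ptree := PNode of seq ptree.

Definition children (t : ptree) : seq ptree := let: PNode l := t in l.

Definition bullet : ptree := PNode [::].

Fixpoint ptree_enc (t : ptree) : GenTree.tree unit :=
  let: PNode l := t in GenTree.Node 0 (map ptree_enc l).

Fixpoint ptree_dec (x : GenTree.tree unit) : ptree :=
  match x with
  | GenTree.Leaf _ => PNode [::]
  | GenTree.Node _ l => PNode (map ptree_dec l)
  end.

Fixpoint ptree_encK (t : ptree) : ptree_dec (ptree_enc t) = t :=
  match t with
  | PNode l => f_equal PNode
      ((fix F (l : seq ptree) : map ptree_dec (map ptree_enc l) = l :=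
          match l with
          | [::] => erefl
          | x :: l' => f_equal2 cons (ptree_encK x) (F l')
          end) l)
  end.

HB.instance Definition _ := Countable.copy ptree (can_type ptree_encK).

Fixpoint ptree_ind' (P : ptree -> Prop)
  (H : forall l, (forall x, List.In x l -> P x) -> P (PNode l)) (t : ptree) : P t :=
  match t with
  | PNode l => H l
      ((fix F (l : seq ptree) : forall x, List.In x l -> P x :=
          match l with
          | [::] => fun x (hx : List.In x [::]) => match hx with end
          | y :: l' => fun x hx =>
              match hx with
              | or_introl e => eq_ind y P (ptree_ind' H y) x e
              | or_intror h => F l' x h
              end
          end) l)
  end.

Lemma ptree_ind2 (P : ptree -> Prop) :
  (forall l, (forall x, x \in l -> P x) -> P (PNode l)) -> forall t, P t.
Proof.
move=> H; apply: ptree_ind' => l IH; apply: H => x xl; apply: IH; move: xl.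
elim: l => //= y l IHl; rewrite in_cons => /orP [/eqP -> | /IHl]; by [left | right].
Qed.

(* A non-planar rooted tree is represented by its canonical planar
   representative: the subtrees at every vertex are (recursively canonical
   and) sorted by a fixed total order on planar trees. *)
Definition ple (a b : ptree) : bool := (pickle a <= pickle b)%N.

Fixpoint canon (t : ptree) : ptree :=
  let: PNode l := t in PNode (sort ple (map canon l)).

Lemma canon_idem (t : ptree) : canon (canon t) = canon t.
Proof.
elim/ptree_ind2: t => l IH /=; congr PNode.
rewrite (@map_id_in _ canon); last first.
  by move=> x; rewrite mem_sort => /mapP [y yl ->]; apply: IH.
apply: sorted_sort.
  by move=> a b c; apply: leq_trans.
by apply: sort_sorted => a b; apply: leq_total.
Qed.

Lemma canon_idemb (t : ptree) : canon (canon t) == canon t.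
Proof. by rewrite canon_idem. Qed.

Definition ntree := {t : ptree | canon t == t}.

(* the forget-planarity projection piT (on trees; extended linearly to formal
   sums by [map piT]) *)
Definition piT (t : ptree) : ntree := @exist _ (fun u => canon u == u) (canon t) (canon_idemb t).

(* Elements of T and T^pl with nonnegative integer coefficients are
   represented as finite lists of trees (coefficient = multiplicity). *)

(* planar left grafting: sigma \searrow tau = sum over vertices v of tau of
   sigma grafted at v as leftmost branch *)
Fixpoint lgraft (s t : ptree) {struct t} : seq ptree :=
  match t with
  | PNode l => PNode (s :: l) :: map PNode
      ((fix aux (l : seq ptree) : seq (seq ptree) :=
          match l with
          | [::] => [::]
          | x :: l' => [seq u :: l' | u <- lgraft s x] ++ [seq x :: r | r <- aux l']
          end) l)
  end.

Definition lgraftS (xs ys : seq ptree) : seq ptree :=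
  flatten [seq lgraft x y | x <- xs, y <- ys].

Definition ngraft (s t : ntree) : seq ntree := map piT (lgraft (val s) (val t)).

Definition ngraftS (xs ys : seq ntree) : seq ntree :=
  flatten [seq ngraft x y | x <- xs, y <- ys].

Definition nbutcher (s t : ntree) : ntree := piT (PNode (val s :: children (val t))).

Definition lbutcher (s t : ptree) : ptree := PNode (s :: children t).

(* Psi : T^pl -> T^pl, Psi(bullet) = bullet,
   Psi(sigma1 o\ sigma2) = Psi(sigma1) \searrow Psi(sigma2)
   (every planar tree other than bullet is uniquely B+(sigma1 :: l) =
   sigma1 o\ B+(l)). *)
Fixpoint Psi (t : ptree) : seq ptree :=
  match t with
  | PNode l =>
      (fix aux (l : seq ptree) : seq ptree :=
         match l with
         | [::] => [:: bullet]
         | s :: l' => lgraftS (Psi s) (aux l')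
         end) l
  end.

(* parenthesized words in the letter bullet and one binary operation *)
Inductive mon := MLeaf | MOp of mon & mon.

Fixpoint mon_enc (m : mon) : GenTree.tree unit :=
  match m with
  | MLeaf => GenTree.Leaf tt
  | MOp a b => GenTree.Node 0 [:: mon_enc a; mon_enc b]
  end.

Fixpoint mon_dec (x : GenTree.tree unit) : mon :=
  match x with
  | GenTree.Node _ [:: a; b] => MOp (mon_dec a) (mon_dec b)
  | _ => MLeaf
  end.

Lemma mon_encK : cancel mon_enc mon_dec.
Proof. by elim=> //= a -> b ->. Qed.

HB.instance Definition _ := Countable.copy mon (can_type mon_encK).

Fixpoint eval_graft (m : mon) : seq ntree :=
  match m with
  | MLeaf => [:: piT bullet]
  | MOp a b => ngraftS (eval_graft a) (eval_graft b)
  end.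

Fixpoint eval_butcher (m : mon) : ntree :=
  match m with
  | MLeaf => piT bullet
  | MOp a b => nbutcher (eval_butcher a) (eval_butcher b)
  end.

Fixpoint eval_lbutcher (m : mon) : ptree :=
  match m with
  | MLeaf => bullet
  | MOp a b => lbutcher (eval_lbutcher a) (eval_lbutcher b)
  end.

Local Open Scope ring_scope.
Definition coef (K : fieldType) (xs : seq ntree) (u : ntree) : K :=
  (count_mem u xs)%:R.

Definition lin_comb (K : fieldType) (ms : seq mon) (c : mon -> K) (u : ntree) : K :=
  \sum_(m <- ms) c m * coef K (eval_graft m) u.

Definition monomial_basis (K : fieldType) (B : mon -> Prop) : Prop :=
  (forall (ms : seq mon) (c : mon -> K), uniq ms -> (forall m, m \in ms -> B m) ->
     (forall u, lin_comb ms c u = 0) -> forall m, m \in ms -> c m = 0)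
  /\ (forall t : ntree, exists (ms : seq mon) (c : mon -> K),
        (forall m, m \in ms -> B m) /\ forall u, lin_comb ms c u = (u == t)%:R).

(* tree-grounded: the lower-energy terms m(bullet, o->), m in B, are exactly
   the trees of T, each obtained once *)
Definition tree_grounded (B : mon -> Prop) : Prop :=
  (forall t : ntree, exists m, B m /\ eval_butcher m = t)
  /\ (forall m1 m2, B m1 -> B m2 -> eval_butcher m1 = eval_butcher m2 -> m1 = m2).

Definition section (S : ntree -> ptree) : Prop := forall t, piT (S t) = t.

(* B consists exactly of the monomials m_{S(t)}, t in T, where m_sigma is the
   unique monomial with m_sigma(bullet, o\) = sigma *)
Definition basis_of_section (B : mon -> Prop) (S : ntree -> ptree) : Prop :=
  forall m, B m <-> exists t, eval_lbutcher m = S t.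

From HB Require Import structures.
From mathcomp Require Import all_boot all_order all_algebra.
From Stdlib Require Import IndefiniteDescription.

Set Implicit Arguments.
Unset Strict Implicit.
Unset Printing Implicit Defensive.

(* The left Butcher product makes the planar trees the free magma on
   [bullet], so [eval_lbutcher] is a bijection between monomials and planar
   trees, and the forget-planarity map [piT] is a morphism both from the left
   Butcher product to the Butcher product and from left grafting to grafting.
   The first fact turns tree-groundedness into a purely set-theoretic
   statement: a set of monomials meets every fibre of [piT \o eval_lbutcher]
   exactly once iff it is the preimage of the image of a section of [piT].
   The second fact gives [m(bullet, ->) = pi (Psi (m(bullet, o\)))] for every
   monomial, by induction on [m]; it holds because grafting below a non-root
   vertex modifies a single child, hence commutes with permuting the children
   and with replacing them by their canonical forms. *)

Section TransversalOfFibres.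

Variables (A P Q : Type) (f : A -> P) (p : P -> Q) (g : A -> Q).
Hypotheses (f_bij : bijective f) (gE : forall a, g a = p (f a)).

Lemma transversal_iff_section_image (B : A -> Prop) :
  ((forall q, exists a, B a /\ g a = q) /\
   (forall a1 a2, B a1 -> B a2 -> g a1 = g a2 -> a1 = a2))
  <-> exists S : Q -> P, (forall q, p (S q) = q) /\
                         (forall a, B a <-> exists q, f a = S q).
Proof.
have f_inj := bij_inj f_bij; have [h fK hK] := f_bij.
split=> [[onto uniq_B] | [S [SK BE]]].
- pose a_ q := proj1_sig (constructive_indefinite_description _ (onto q)).
  have a_P q : B (a_ q) /\ g (a_ q) = q :=
    proj2_sig (constructive_indefinite_description _ (onto q)).
  exists (f \o a_); split=> [q | a]; first by rewrite /= -gE (a_P q).2.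
  split=> [Ba | [q /f_inj ->]]; last exact: (a_P q).1.
  by exists (g a); congr f; apply: uniq_B (a_P _).1 _; rewrite ?(a_P _).2.
- split=> [q | a1 a2 /BE[q1 e1] /BE[q2 e2]].
    by exists (h (S q)); rewrite gE hK SK; split=> //; apply/BE; exists q.
  by rewrite !gE e1 e2 !SK => e12; apply: f_inj; rewrite e1 e2 e12.
Qed.

End TransversalOfFibres.

Fixpoint ptree_mon (t : ptree) : mon :=
  let: PNode l := t in
  (fix aux (l : seq ptree) : mon :=
     if l is s :: l' then MOp (ptree_mon s) (aux l') else MLeaf) l.

Lemma eval_lbutcherK : cancel eval_lbutcher ptree_mon.
Proof.
elim=> //= a IHa b; rewrite /lbutcher.
by case: (eval_lbutcher b) => l /= <-; rewrite IHa.
Qed.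

Lemma ptree_monK : cancel ptree_mon eval_lbutcher.
Proof.
elim/ptree_ind2=> l; elim: l => //= x l IHl IH.
rewrite /lbutcher IH ?mem_head // IHl // => y yl.
by apply: IH; rewrite in_cons yl orbT.
Qed.

Lemma eval_lbutcher_bij : bijective eval_lbutcher.
Proof. exact: Bijective eval_lbutcherK ptree_monK. Qed.

Lemma Psi_lbutcher x y : Psi (lbutcher x y) = lgraftS (Psi x) (Psi y).
Proof. by case: y. Qed.

Lemma ple_total : total ple. Proof. by move=> a b; apply: leq_total. Qed.
Lemma ple_trans : transitive ple. Proof. by move=> a b c; apply: leq_trans. Qed.

Lemma ple_anti : antisymmetric ple.
Proof.
move=> a b /andP[ab ba]; apply: (pcan_inj (@pickleK _)).
by apply/eqP; rewrite eqn_leq; apply/andP.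
Qed.

Definition canon_seq (l : seq ptree) : seq ptree := sort ple (map canon l).

Lemma canonE l : canon (PNode l) = PNode (canon_seq l). Proof. by []. Qed.

Lemma perm_canon_seq l1 l2 :
  perm_eq (map canon l1) (map canon l2) -> canon_seq l1 = canon_seq l2.
Proof. exact/perm_sortP/ple_anti/ple_trans/ple_total. Qed.

Lemma map_canon_idem l : map canon (map canon l) = map canon l.
Proof. by rewrite -map_comp; apply: eq_map => x; apply: canon_idem. Qed.

Lemma map_canon_seq l : map canon (canon_seq l) = canon_seq l.
Proof.
apply: map_id_in => x; rewrite mem_sort => /mapP[y _ ->]; exact: canon_idem.
Qed.

Lemma perm_map_canon_seq l : perm_eq (map canon (canon_seq l)) (map canon l).
Proof. by rewrite map_canon_seq perm_sort. Qed.

Lemma canon_seq_cons x l : canon_seq (x :: l) = canon_seq (canon x :: canon_seq l).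
Proof.
by apply: perm_canon_seq; rewrite /= canon_idem perm_cons perm_sym perm_map_canon_seq.
Qed.

Lemma canon_seq_congr_cons x x' l l' : canon x = canon x' ->
  perm_eq (map canon l) (map canon l') -> canon_seq (x :: l) = canon_seq (x' :: l').
Proof. by move=> ex pl; apply: perm_canon_seq; rewrite /= ex perm_cons. Qed.

Lemma perm_map_piT xs ys : perm_eq (map canon xs) (map canon ys) ->
  perm_eq (map piT xs) (map piT ys).
Proof. by move=> p; apply: (perm_map_inj val_inj); rewrite -!map_comp. Qed.

Lemma nbutcher_piT x y : nbutcher (piT x) (piT y) = piT (lbutcher x y).
Proof.
apply: val_inj; case: y => l /=; congr PNode.
by apply: canon_seq_congr_cons; rewrite ?canon_idem ?perm_map_canon_seq.
Qed.

Lemma eval_butcher_piT m : eval_butcher m = piT (eval_lbutcher m).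
Proof. by elim: m => //= a -> b ->; apply: nbutcher_piT. Qed.

Section LeftGrafting.

(* The children lists of the trees obtained by grafting [s] below a non-root
   vertex of [PNode l]. *)
Fixpoint graft_children (s : ptree) (l : seq ptree) : seq (seq ptree) :=
  if l is x :: l' then
    [seq u :: l' | u <- lgraft s x] ++ [seq x :: r | r <- graft_children s l']
  else [::].

Lemma lgraftE s l :
  lgraft s (PNode l) = PNode (s :: l) :: map PNode (graft_children s l).
Proof. by rewrite /=; congr (_ :: map PNode _); elim: l => //= x l ->. Qed.

Notation cperm G G' := (perm_eq (map canon_seq G) (map canon_seq G')).

Lemma sort_ple_cons_congr c l l' :
  perm_eq l l' -> sort ple (c :: l) = sort ple (c :: l').
Proof.
by move=> p; apply/(perm_sortP ple_total ple_trans ple_anti); rewrite perm_cons.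
Qed.

Lemma map_canon_seq_consl L l :
  map canon_seq [seq u :: l | u <- L] =
  map (fun c => sort ple (c :: map canon l)) (map canon L).
Proof. by rewrite -!map_comp. Qed.

Lemma map_canon_seq_consr x G :
  map canon_seq [seq x :: r | r <- G] =
  map (fun k => canon_seq (canon x :: k)) (map canon_seq G).
Proof. by rewrite -!map_comp; apply: eq_map => r; apply: canon_seq_cons. Qed.

Lemma graft_children_congr_cons s s' x x' l l' : canon x = canon x' ->
  perm_eq (map canon (lgraft s x)) (map canon (lgraft s' x')) ->
  perm_eq (map canon l) (map canon l') ->
  cperm (graft_children s l) (graft_children s' l') ->
  cperm (graft_children s (x :: l)) (graft_children s' (x' :: l')).
Proof.
move=> ex pgx pl pg /=; rewrite !map_cat; apply: perm_cat.
  rewrite !map_canon_seq_consl (eq_map (fun c => sort_ple_cons_congr c pl)).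
  exact: perm_map.
by rewrite !map_canon_seq_consr ex; apply: perm_map.
Qed.

Lemma canon_seq_swap a b r : canon_seq [:: a, b & r] = canon_seq [:: b, a & r].
Proof. exact/perm_canon_seq/perm_map/permPl/(perm_catCA [:: a] [:: b] r). Qed.

Lemma graft_children_swap s x y l :
  cperm (graft_children s (x :: y :: l)) (graft_children s (y :: x :: l)).
Proof.
have eA : map canon_seq [seq u :: y :: l | u <- lgraft s x] =
          map canon_seq [seq y :: r | r <- [seq u :: l | u <- lgraft s x]].
  by rewrite -!map_comp; apply: eq_map => u; apply: canon_seq_swap.
have eB : map canon_seq [seq x :: r | r <- [seq u :: l | u <- lgraft s y]] =
          map canon_seq [seq u :: x :: l | u <- lgraft s y].
  by rewrite -!map_comp; apply: eq_map => u; apply: canon_seq_swap.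
have eC : map canon_seq [seq x :: r | r <- [seq y :: r | r <- graft_children s l]] =
          map canon_seq [seq y :: r | r <- [seq x :: r | r <- graft_children s l]].
  by rewrite -!map_comp; apply: eq_map => u; apply: canon_seq_swap.
by rewrite /= !map_cat eA eB eC perm_catCA.
Qed.

Lemma graft_children_move s x l1 l2 :
  cperm (graft_children s (l1 ++ x :: l2)) (graft_children s (x :: l1 ++ l2)).
Proof.
elim: l1 => [|y l1 IH] //=; apply: perm_trans (graft_children_swap s y x _).
apply: graft_children_congr_cons => //.
exact/perm_map/permPl/(perm_catCA l1 [:: x] l2).
Qed.

Lemma graft_children_perm s l1 l2 : perm_eq l1 l2 ->
  cperm (graft_children s l1) (graft_children s l2).
Proof.
elim: l1 l2 => [|x l1 IH] l2 p; first by move: p; rewrite perm_sym => /perm_nilP ->.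
have : x \in l2 by rewrite -(perm_mem p) mem_head.
move: p => /[swap] /splitPr[r1 r2] p.
have pl1 : perm_eq l1 (r1 ++ r2).
  rewrite -(perm_cons x); apply: perm_trans p _.
  exact/permPl/(perm_catCA r1 [:: x] r2).
rewrite perm_sym; apply: perm_trans (graft_children_move s x r1 r2) _; rewrite perm_sym.
by apply: graft_children_congr_cons => //; [apply: perm_map | apply: IH].
Qed.

Lemma map_canon_PNode G : map canon (map PNode G) = map PNode (map canon_seq G).
Proof. by rewrite -!map_comp. Qed.

Lemma lgraft_canon s s' y : canon s = canon s' ->
  perm_eq (map canon (lgraft s y)) (map canon (lgraft s' (canon y))).
Proof.
elim/ptree_ind2: y s s' => l IH s s' es.
have pl : perm_eq (map canon l) (map canon (canon_seq l)).
  by rewrite perm_sym perm_map_canon_seq.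
rewrite canonE !lgraftE !map_cons !canonE (canon_seq_congr_cons es pl) perm_cons.
rewrite !map_canon_PNode; apply: perm_map.
apply: (@perm_trans _ (map canon_seq (graft_children s' (map canon l)))); last first.
  by apply: graft_children_perm; rewrite perm_sym perm_sort.
elim: l IH {pl} => [|x l IHl] IH //=.
apply: graft_children_congr_cons; rewrite ?canon_idem ?map_canon_idem //.
  by apply: IH; rewrite ?mem_head.
by apply: IHl => z zl; apply: IH; rewrite in_cons zl orbT.
Qed.

End LeftGrafting.

Lemma ngraft_piT x y : perm_eq (ngraft (piT x) (piT y)) (map piT (lgraft x y)).
Proof.
by rewrite perm_sym; apply: perm_map_piT; apply: lgraft_canon; rewrite canon_idem.
Qed.

Lemma perm_flatten_allpairs (A B : Type) (C : eqType) (f g : A -> B -> seq C) xs ys :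
  (forall x y, perm_eq (f x y) (g x y)) ->
  perm_eq (flatten [seq f x y | x <- xs, y <- ys])
          (flatten [seq g x y | x <- xs, y <- ys]).
Proof.
move=> fg; elim: xs => //= x xs IH; rewrite !flatten_cat; apply: perm_cat => //.
by elim: ys {IH} => //= y ys IHy; apply: perm_cat.
Qed.

Lemma ngraftS_piT xs ys :
  perm_eq (ngraftS (map piT xs) (map piT ys)) (map piT (lgraftS xs ys)).
Proof.
rewrite /lgraftS /ngraftS map_flatten allpairs_mapl allpairs_mapr map_allpairs.
exact: perm_flatten_allpairs ngraft_piT.
Qed.

Lemma perm_ngraftS xs xs' ys ys' : perm_eq xs xs' -> perm_eq ys ys' ->
  perm_eq (ngraftS xs ys) (ngraftS xs' ys').
Proof. by move=> pxs pys; apply/perm_flatten/perm_allpairs_dep. Qed.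

Lemma eval_graft_Psi m : perm_eq (eval_graft m) (map piT (Psi (eval_lbutcher m))).
Proof.
elim: m => [|a IHa b IHb] //; rewrite [eval_lbutcher _]/= Psi_lbutcher /=.
exact: perm_trans (perm_ngraftS IHa IHb) (ngraftS_piT _ _).
Qed.

Theorem lemma3p4 (K : fieldType) (B : mon -> Prop) :
  monomial_basis K B ->
  (tree_grounded B <-> exists S : ntree -> ptree, section S /\ basis_of_section B S)
  /\ (forall S : ntree -> ptree, section S -> basis_of_section B S ->
        forall (t : ntree) (m : mon), eval_lbutcher m = S t ->
          perm_eq (eval_graft m) (map piT (Psi (S t)))).
Proof.
move=> _; split; last by move=> S _ _ t m <-; apply: eval_graft_Psi.
exact: (transversal_iff_section_image eval_lbutcher_bij eval_butcher_piT).
Qed.
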